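(* For every standard tableau $T$ of degree $n\ge2$ in which $2$ precedes $1$ in the reading word, $$\overset{*}{\mathbb B}{}_2^{(1)}T=R_{n-1}\bar\sigma_{n-2}\cdots\bar\sigma_1\,r_{(10\to11)}\,\tau_{-1}T.$$ Moreover, for every word $w$ with $(\mathrm{ev}_a,\mathrm{ev}_{a+1})\in\{(1,2),(2,1)\}$, $\sigma_a(w^R)=(\bar\sigma_aw)^R$, where $w^R=w_n\cdots w_1$ is the reversal of $w=w_1\cdots w_n$.
   Context: Tableaux (French convention: rows of lengths $\lambda_1\ge\lambda_2\ge\cdots$ from bottom to top). A tableau is a filling of a diagram, identified with (shape, reading word), the reading word listing the entries row by row from top row to bottom row, each row left to right; word operators act on tableaux via reading words, keeping the shape. Standard tableau of degree $n$: rows increase left to right, columns increase upwards, entries $1,\dots,n$ each once. $T^t$ is the transpose (reflection of diagram and entries across the main diagonal). Word operators (compositions act right to left): $\tau_{-1}$ subtracts $1$ from every letter; $r_{(ab\to cd)}$ applies to a word whose letters in $\{a,b\}$ are, left to right, exactly one $a$ then one $b$, and replaces them by $c$ and $d$ respectively; $R_a$ deletes all letters (cells) equal to $a$; for a word with $(\mathrm{ev}_a,\mathrm{ev}_{a+1})\in\{(1,2),(2,1)\}$ ($\mathrm{ev}_i$ = number of occurrences of $i$) and $b=a+1$, $\sigma_a$ replaces the subword of letters in $\{a,b\}$, in place, via $aab\leftrightarrow abb$, $aba\leftrightarrow bba$, $baa\leftrightarrow bab$, and $\bar\sigma_a$ replaces it via $aab\leftrightarrow bab$, $aba\leftrightarrow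 abb$, $baa\leftrightarrow bba$. For a standard tableau $T$ of degree $n\ge2$ in which $1$ precedes $2$ in the reading word, $\overset{*}{\mathbb B}{}_2^{(0)}T=R_{n-1}\sigma_{n-2}\cdots\sigma_1r_{(01\to11)}\tau_{-1}T$; for a standard $T$ of degree $n\ge2$ in which $2$ precedes $1$, $\overset{*}{\mathbb B}{}_2^{(1)}T=(\overset{*}{\mathbb B}{}_2^{(0)}T^t)^t$. *)

From mathcomp Require Import all_boot.

Set Implicit Arguments.
Unset Strict Implicit.
Unset Printing Implicit Defensive.

(* A cell (i, j): row i (row 0 is the bottom row, French convention),
   column j (column 0 is the leftmost). *)
Definition cell := (nat * nat)%type.

Definition rd_le (a b : cell) : bool :=
  (b.1 < a.1) || ((a.1 == b.1) && (a.2 <= b.2)).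

(* The cells of the diagram of la (rows of lengths la_1, la_2, ... from
   bottom to top), listed in reading order. *)
Definition diagram (la : seq nat) : seq cell :=
  flatten [seq [seq (i, j) | j <- iota 0 (nth 0 la i)]
          | i <- rev (iota 0 (size la))].

Definition is_partition (la : seq nat) : bool :=
  sorted geq la && (0 \notin la).

(* A tableau is identified with (shape, reading word): the shape is the list
   of its cells in reading order, the word lists the entries in that order. *)
Definition tableau := (seq cell * seq nat)%type.

Definition tshape (T : tableau) : seq cell := T.1.
Definition tword (T : tableau) : seq nat := T.2.

Definition entry (T : tableau) (c : cell) : nat :=
  nth 0 (tword T) (index c (tshape T)).

Definition standard (n : nat) (T : tableau) : Prop :=
  exists la : seq nat,
    is_partition la /\ sumn la = n /\ tshape T = diagram la /\
    perm_eq (tword T) (iota 1 n) /\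
    (forall i j, (i, j.+1) \in tshape T -> entry T (i, j) < entry T (i, j.+1)) /\
    (forall i j, (i.+1, j) \in tshape T -> entry T (i, j) < entry T (i.+1, j)).

Definition swapc (c : cell) : cell := (c.2, c.1).

Definition transpose (T : tableau) : tableau :=
  let S := sort rd_le (map swapc (tshape T)) in
  (S, [seq entry T (swapc c) | c <- S]).

Definition wact (f : seq nat -> seq nat) (T : tableau) : tableau :=
  (tshape T, f (tword T)).

Definition tau_m1 (w : seq nat) : seq nat := map predn w.

(* r_{(ab -> cd)}: on a word whose letters in {a,b} are, left to right,
   exactly one a then one b, replaces them by c and d respectively.
   (Total extension: every a becomes c, every b becomes d.) *)
Definition rop (a b c d : nat) (w : seq nat) : seq nat :=
  map (fun x => if x == a then c else if x == b then d else x) w.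

Definition Rdel (a : nat) (T : tableau) : tableau :=
  (mask [seq x != a | x <- tword T] (tshape T), filter (predC1 a) (tword T)).

Definition ev (i : nat) (w : seq nat) : nat := count_mem i w.

Definition ev_cond (a : nat) (w : seq nat) : bool :=
  ((ev a w, ev a.+1 w) == (1, 2)) || ((ev a w, ev a.+1 w) == (2, 1)).

Fixpoint fill (P : pred nat) (w s : seq nat) : seq nat :=
  match w with
  | [::] => [::]
  | x :: w' => if P x then head x s :: fill P w' (behead s)
               else x :: fill P w' s
  end.

Definition in_ab (a : nat) : pred nat := fun x => (x == a) || (x == a.+1).

Definition sigma_rule (a : nat) (s : seq nat) : seq nat :=
  let b := a.+1 in
  if s == [:: a; a; b] then [:: a; b; b] else
  if s == [:: a; b; b] then [:: a; a; b] else
  if s == [:: a; b; a] then [:: b; b; a] else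
  if s == [:: b; b; a] then [:: a; b; a] else
  if s == [:: b; a; a] then [:: b; a; b] else
  if s == [:: b; a; b] then [:: b; a; a] else s.

Definition sigmabar_rule (a : nat) (s : seq nat) : seq nat :=
  let b := a.+1 in
  if s == [:: a; a; b] then [:: b; a; b] else
  if s == [:: b; a; b] then [:: a; a; b] else
  if s == [:: a; b; a] then [:: a; b; b] else
  if s == [:: a; b; b] then [:: a; b; a] else
  if s == [:: b; a; a] then [:: b; b; a] else
  if s == [:: b; b; a] then [:: b; a; a] else s.

Definition sigma (a : nat) (w : seq nat) : seq nat :=
  fill (in_ab a) w (sigma_rule a (filter (in_ab a) w)).

Definition sigmabar (a : nat) (w : seq nat) : seq nat :=
  fill (in_ab a) w (sigmabar_rule a (filter (in_ab a) w)).

(* sigma_{n-2} ... sigma_1 (sigma_1 applied first). *)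
Definition sigma_chain (n : nat) (w : seq nat) : seq nat :=
  foldl (fun w k => sigma k w) w (iota 1 (n - 2)).

Definition sigmabar_chain (n : nat) (w : seq nat) : seq nat :=
  foldl (fun w k => sigmabar k w) w (iota 1 (n - 2)).

Definition B0 (n : nat) (T : tableau) : tableau :=
  Rdel n.-1 (wact (sigma_chain n) (wact (rop 0 1 1 1) (wact tau_m1 T))).

Definition B1 (n : nat) (T : tableau) : tableau :=
  transpose (B0 n (transpose T)).

Definition precedes (x y : nat) (w : seq nat) : bool := index x w < index y w.

(* Both sides relabel the same cells. After tau_{-1} and r, a cell c of T carrying
   the entry e(c) is labelled merge12 (e c), so 1 and 2 both become 1. The right-hand
   side then applies sigmabar_1, ..., sigmabar_(n-2) to the row reading of the cells,
   while B_2^(1) applies sigma_1, ..., sigma_(n-2) to their column reading, which is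
   the row reading of T^t.
   Before step a the labelling satisfies stage_inv: rows increase strictly, columns
   weakly, and the labels are 1, ..., n-1 with a doubled; for a = 1 this is where
   "2 precedes 1" enters, as it forbids 1 and 2 side by side in a row. Then none of the
   three cells labelled a or a+1 lies strictly south-west of another, so the column
   reading lists them in the reverse of the row reading, and by the second claim
   sigma_a on the column reading relabels the cells exactly as sigmabar_a does on the
   row reading. That relabelling raises one a to a+1 at a cell whose right neighbour is
   not a+1 and whose upper neighbour is not a, which gives stage_inv at a+1. So both
   chains end with the same labelling, and transposing back after R_(n-1) yields the
   first claim.
   The second claim holds because sigma_a and sigmabar_a rewrite the subword of letters
   a, a+1 in place, and on three letters sigma_a (rev s) = rev (sigmabar_a s) is
   checked pattern by pattern. *)

From mathcomp Require Import all_boot zify.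

Set Implicit Arguments.
Unset Strict Implicit.
Unset Printing Implicit Defensive.

Lemma fill_cat (P : pred nat) w1 w2 s1 s2 : size s1 = count P w1 ->
  fill P (w1 ++ w2) (s1 ++ s2) = fill P w1 s1 ++ fill P w2 s2.
Proof.
elim: w1 s1 => [|x w1 IH] s1; first by case: s1.
case: s1 => [|y s1] /=; case: (P x) => //=.
- by move/(IH [::]) ->.
- by rewrite add1n => -[/IH ->].
- by move=> h; rewrite -cat_cons IH.
Qed.

Lemma fill_rev (P : pred nat) w s : size s = count P w ->
  fill P (rev w) (rev s) = rev (fill P w s).
Proof.
elim: w s => [|x w IH] s /=; first by case: s.
rewrite rev_cons -cats1; case: ifP => Px.
  case: s => [|y s] //= [hs].
  by rewrite rev_cons -cats1 fill_cat ?size_rev ?count_rev //= Px IH // rev_cons cats1.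
move=> hs; rewrite -[rev s]cats0 fill_cat ?size_rev ?count_rev //= Px IH //.
by rewrite rev_cons cats1.
Qed.

Lemma size_sigmabar_rule a s : size (sigmabar_rule a s) = size s.
Proof. by rewrite /sigmabar_rule; repeat case: ifP => [/eqP->|_]. Qed.

Lemma sigma_rule_rev a s : sigma_rule a (rev s) = rev (sigmabar_rule a s).
Proof.
have [s3|s3] := eqVneq (size s) 3; last first.
  have ne (q r : seq nat) : size q = 3 -> size r != 3 -> (r == q) = false.
    by move=> q3 r3; apply: contraNF r3 => /eqP->; rewrite q3.
  by rewrite /sigma_rule /sigmabar_rule !ne ?size_rev.
have nab : (a == a.+1) = false by lia.
have nba : (a.+1 == a) = false by lia.
have abP u : [\/ u = a, u = a.+1 | (u == a) = false /\ (u == a.+1) = false].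
  case: (eqVneq u a) => [->|/negbTE ua]; first exact: Or31.
  by case: (eqVneq u a.+1) => [->|/negbTE ub]; [apply: Or32|apply: Or33].
move: s3; case: s => [|x [|y [|z [|? ?]]]] // _.
rewrite /sigma_rule /sigmabar_rule /rev /= !eqseq_cons !andbT.
by case: (abP x) (abP y) (abP z) => [->|->|[-> ->]] [->|->|[-> ->]] [->|->|[-> ->]];
  rewrite ?eqxx ?nab ?nba ?andbF.
Qed.

Lemma sigma_rev a w : sigma a (rev w) = rev (sigmabar a w).
Proof.
rewrite /sigma /sigmabar filter_rev sigma_rule_rev fill_rev //.
by rewrite size_sigmabar_rule size_filter.
Qed.

Section Relabel.
Variable X : eqType.

Lemma fill_map (P : pred nat) (f : X -> nat) (l : seq X) s : uniq l ->
  fill P (map f l) s =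
  map (fun c => if P (f c) then nth (f c) s (index c (filter (preim f P) l))
                else f c) l.
Proof.
elim: l s => [//|c l IH] s /= /andP[cl ul].
case: ifP => Pc /=; rewrite IH //; congr (_ :: _); first by rewrite eqxx.
apply/eq_in_map => d dl /=; case: ifP => // Pd.
have -> : (c == d) = false by apply: contraNF cl => /eqP->.
by case: s => [|y s]; rewrite ?nth_nil.
Qed.

Definition relabel_sigmabar a (l : seq X) (f : X -> nat) : X -> nat :=
  let L := filter (preim f (in_ab a)) l in
  fun c => if in_ab a (f c) then nth (f c) (sigmabar_rule a (map f L)) (index c L)
           else f c.

Lemma sigmabar_map a l f :
  uniq l -> sigmabar a (map f l) = map (relabel_sigmabar a l f) l.
Proof. by move=> ul; rewrite /sigmabar filter_map fill_map. Qed.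

Lemma index_rev_uniq (s : seq X) x :
  uniq s -> x \in s -> index x (rev s) = (size s).-1 - index x s.
Proof.
elim: s => [//|y s IH] /= /andP[ys us].
rewrite rev_cons -cats1 index_cat mem_rev inE eq_sym.
have [->|nxy] /= := eqVneq x y.
  by rewrite (negbTE ys) eqxx size_rev addn0 subn0.
move=> xs; rewrite xs IH //; have := index_mem x s; rewrite xs; lia.
Qed.

Lemma sigma_map_rev a (l u : seq X) f : uniq u ->
  filter (preim f (in_ab a)) u = rev (filter (preim f (in_ab a)) l) ->
  sigma a (map f u) = map (relabel_sigmabar a l f) u.
Proof.
move=> uu Lu; rewrite /sigma filter_map Lu map_rev sigma_rule_rev fill_map //.
apply/eq_in_map => c cu; rewrite /relabel_sigmabar Lu.
case: ifP => // abc; set L := filter _ l.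
have cL : c \in L by rewrite -mem_rev -Lu mem_filter /= abc.
have uL : uniq L by rewrite -rev_uniq -Lu filter_uniq.
have ci : index c L < size L by rewrite index_mem.
by rewrite index_rev_uniq // nth_rev size_sigmabar_rule size_map; [congr nth|]; lia.
Qed.

Lemma relabel_upd a (l : seq X) f x v :
  let L := filter (preim f (in_ab a)) l in
  x \in L -> sigmabar_rule a (map f L) = map [eta f with x |-> v] L ->
  relabel_sigmabar a l f =1 [eta f with x |-> v].
Proof.
move=> L xL HR c; rewrite /relabel_sigmabar -/L HR /=.
have abx : in_ab a (f x) by move: xL; rewrite mem_filter => /andP[].
case: ifP => abc.
  case cL: (c \in L); first by rewrite (nth_map c) ?index_mem // nth_index.
  rewrite nth_default; last by rewrite size_map memNindex ?cL.
  by case: eqP => // E; rewrite E xL in cL.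
by case: eqP => // E; rewrite E abx in abc.
Qed.

Lemma sigmabar_foldl_map (l : seq X) f a m : uniq l ->
  foldl (fun w k => sigmabar k w) (map f l) (iota a m) =
  map (foldl (fun g k => relabel_sigmabar k l g) f (iota a m)) l.
Proof.
by move=> ul; elim: m a f => [//|m IH] a f /=; rewrite sigmabar_map // IH.
Qed.

End Relabel.

Definition rd_lt (x y : cell) : bool := (y.1 < x.1) || ((x.1 == y.1) && (x.2 < y.2)).

Definition col_rd_le (x y : cell) : bool := rd_le (swapc x) (swapc y).

Lemma rd_lt_trans : transitive rd_lt.
Proof. by move=> [? ?] [? ?] [? ?]; rewrite /rd_lt /=; lia. Qed.

Lemma rd_lt_irr : irreflexive rd_lt.
Proof. by case=> ? ?; rewrite /rd_lt /=; lia. Qed.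

Lemma rd_le_trans : transitive rd_le.
Proof. by move=> [? ?] [? ?] [? ?]; rewrite /rd_le /=; lia. Qed.

Lemma rd_le_anti : antisymmetric rd_le.
Proof.
by move=> [? ?] [? ?]; rewrite /rd_le /= => ?; apply/eqP; rewrite xpair_eqE; lia.
Qed.

Lemma rd_le_total : total rd_le.
Proof. by move=> [? ?] [? ?]; rewrite /rd_le /=; lia. Qed.

Lemma col_rd_le_trans : transitive col_rd_le.
Proof. by move=> ? ? ?; apply: rd_le_trans. Qed.

Lemma col_rd_le_anti : antisymmetric col_rd_le.
Proof. by move=> [? ?] [? ?] /rd_le_anti [-> ->]. Qed.

Lemma rd_ltW : subrel rd_lt rd_le.
Proof. by move=> [? ?] [? ?]; rewrite /rd_lt /rd_le /=; lia. Qed.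

Definition ideal (S : seq cell) : Prop :=
  forall i j i' j' : nat, (i, j) \in S -> i' <= i -> j' <= j -> (i', j') \in S.

Definition row_strict (S : seq cell) (f : cell -> nat) : Prop :=
  forall i j : nat, (i, j.+1) \in S -> f (i, j) < f (i, j.+1).

Definition col_weak (S : seq cell) (f : cell -> nat) : Prop :=
  forall i j : nat, (i.+1, j) \in S -> f (i, j) <= f (i.+1, j).

Definition stage_inv (n : nat) (S : seq cell) (f : cell -> nat) (a : nat) :=
  [/\ row_strict S f, col_weak S f & perm_eq (map f S) (a :: iota 1 n.-1)].

Lemma stage_inv_count_succ n S f a :
  stage_inv n S f a -> count_mem a.+1 (map f S) <= 1.
Proof.
case=> _ _ pf; rewrite (permP pf) /= count_uniq_mem ?iota_uniq //.
by case: (_ \in _); lia.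
Qed.

Lemma perm_aab_cases a x y z : perm_eq [:: x; y; z] [:: a; a; a.+1] ->
  [\/ [:: x; y; z] = [:: a; a; a.+1], [:: x; y; z] = [:: a; a.+1; a]
    | [:: x; y; z] = [:: a.+1; a; a]].
Proof.
move=> p; have ab u : u \in [:: x; y; z] -> (u == a) || (u == a.+1).
  by rewrite (perm_mem p) !inE orbA orbb.
have := permP p (pred1 a); have nba : (a.+1 == a) = false by lia.
move: (ab x) (ab y) (ab z); rewrite !inE !eqxx ?orbT.
move=> /(_ isT) /orP[] /eqP-> /(_ isT) /orP[] /eqP-> /(_ isT) /orP[] /eqP->;
  rewrite /= ?eqxx ?nba // => _; by [apply: Or31 | apply: Or32 | apply: Or33].
Qed.

Lemma perm_ab_labels (S : seq cell) n f a : 0 < a -> a.+1 < n ->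
  perm_eq (map f S) (a :: iota 1 n.-1) ->
  perm_eq (map f (filter (preim f (in_ab a)) S)) [:: a; a; a.+1].
Proof.
move=> a0 an pf; rewrite -filter_map; apply: perm_trans (perm_filter _ pf) _.
rewrite /= {1}/in_ab eqxx /= perm_cons; apply: uniq_perm.
- exact/filter_uniq/iota_uniq.
- by rewrite /= inE; lia.
by move=> u; rewrite mem_filter mem_iota !inE /in_ab; apply/idP/idP; lia.
Qed.

Section Labellings.
Variable S : seq cell.
Hypotheses (S_sorted : sorted rd_lt S) (S_ideal : ideal S).

Lemma S_uniq : uniq S.
Proof. exact: sorted_uniq rd_lt_trans rd_lt_irr _ S_sorted. Qed.

Lemma row_strict_lt f i j k : row_strict S f ->
  (i, k) \in S -> j < k -> f (i, j) < f (i, k).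
Proof.
move=> rs; elim: k => [//|k IH] ik; rewrite ltnS leq_eqVlt => /orP[/eqP-> |jk].
  exact: rs.
by apply: ltn_trans (rs _ _ ik); apply: IH jk; apply: S_ideal ik _ _.
Qed.

Lemma col_weak_le f i i' j : col_weak S f ->
  (i', j) \in S -> i <= i' -> f (i, j) <= f (i', j).
Proof.
move=> cw; elim: i' => [|k IH] kj; first by rewrite leqn0 => /eqP->.
rewrite leq_eqVlt => /orP[/eqP-> //|ik].
by apply: leq_trans (cw _ _ kj); apply: IH ik; apply: S_ideal kj _ _.
Qed.

Lemma ab_cells_not_SW f a x y : row_strict S f -> col_weak S f ->
  count_mem a.+1 (map f S) <= 1 -> x \in S -> y \in S ->
  in_ab a (f x) -> in_ab a (f y) -> ~~ ((y.1 < x.1) && (y.2 < x.2)).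
Proof.
case: x y => [xi xj] [yi yj] rs cw b1 xS yS abx aby /=; apply/andP => -[ltij ltj].
have zS : (yi, xj) \in S by apply: S_ideal xS _ _; lia.
have := row_strict_lt rs zS ltj; have := col_weak_le cw xS (ltnW ltij).
move: abx aby; rewrite /in_ab /= => abx aby zx yz.
suff : 1 < count_mem a.+1 (map f S) by lia.
rewrite count_map -size_filter.
apply: (@uniq_leq_size _ [:: (xi, xj); (yi, xj)]) => [|c].
  by rewrite /= inE xpair_eqE; lia.
by rewrite !inE mem_filter /= => /orP[] /eqP->; rewrite ?xS ?zS andbT; lia.
Qed.

Lemma filter_col_reading (U : seq cell) (P : pred cell) :
  perm_eq U S -> sorted col_rd_le U ->
  {in filter P S &, forall x y, ~~ ((y.1 < x.1) && (y.2 < x.2))} ->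
  filter P U = rev (filter P S).
Proof.
move=> pUS sU noSW; apply: (sorted_eq col_rd_le_trans col_rd_le_anti).
- exact: sorted_filter col_rd_le_trans _ _ sU.
- rewrite rev_sorted; apply: (sub_in_sorted (P := mem (filter P S))); last first.
  + exact: sorted_filter rd_le_trans _ _ (sub_sorted rd_ltW S_sorted).
  + exact: allss.
  move=> x y xL yL; have := noSW x y xL yL.
  by case: x y {xL yL} => [? ?] [? ?]; rewrite /col_rd_le /rd_le /=; lia.
- by rewrite perm_sym perm_rev perm_sym; apply: perm_filter.
Qed.

Lemma stage_inv_upd n f (g : cell -> nat) a (x : cell) :
  stage_inv n S f a -> x \in S -> f x = a ->
  {in S, forall y, f y = a.+1 -> y != (x.1, x.2.+1)} ->
  {in S, forall y, f y = a -> y != (x.1.+1, x.2)} ->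
  g =1 [eta f with x |-> a.+1] -> stage_inv n S g a.+1.
Proof.
case: x => p q [rs cw pf] xS fx /= right up eg; split.
- move=> i j ij; rewrite !eg /=; have := rs i j ij.
  case: eqP => [[? ?]|_]; case: eqP => [[? ?]|_]; subst => //; try lia.
  by have := right _ ij; rewrite eqxx; lia.
- move=> i j ij; rewrite !eg /=; have := cw i j ij.
  case: eqP => [[? ?]|_]; case: eqP => [[? ?]|_]; subst => //; try lia.
  by have := up _ ij; rewrite eqxx; lia.
have pxS := perm_to_rem xS.
have gf : map g (rem (p, q) S) = map f (rem (p, q) S).
  apply/eq_in_map => c cS; rewrite eg /=.
  by case: eqP => // E; rewrite E mem_rem_uniqF ?S_uniq in cS.
rewrite (permPl (perm_map g pxS)) /= eg /= eqxx perm_cons gf.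
by rewrite -(perm_cons a) -{1}fx -/(map f (_ :: _)) -(permPl (perm_map f pxS)).
Qed.

Lemma stage_inv_relabel n f a : 0 < a -> a.+1 < n -> stage_inv n S f a ->
  stage_inv n S (relabel_sigmabar a S f) a.+1.
Proof.
move=> a0 an inv; have [rs cw pf] := inv.
set L := filter (preim f (in_ab a)) S.
have LS : {subset L <= S} by move=> y; rewrite mem_filter => /andP[].
have raise (x : cell) : x \in L -> f x = a ->
    {in L, forall y, f y = a.+1 -> y != (x.1, x.2.+1)} ->
    {in L, forall y, f y = a -> y != (x.1.+1, x.2)} ->
    sigmabar_rule a (map f L) = map [eta f with x |-> a.+1] L ->
    stage_inv n S (relabel_sigmabar a S f) a.+1.
  move=> xL fx right up rule.
  apply: stage_inv_upd inv (LS _ xL) fx _ _ (relabel_upd xL rule) => y yS fy;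
    [apply: right | apply: up] => //; by rewrite mem_filter /= yS /in_ab fy eqxx ?orbT.
have labL : perm_eq (map f L) [:: a; a; a.+1] := perm_ab_labels a0 an pf.
have [[p1 q1] [[p2 q2] [[p3 q3] EL]]] : exists c1 c2 c3, L = [:: c1; c2; c3].
  move: (perm_size labL); rewrite size_map.
  by case: (L) => [|c1 [|c2 [|c3 []]]] // _; exists c1, c2, c3.
have sL : sorted rd_lt L := sorted_filter rd_lt_trans _ S_sorted.
have [c1L c2L c3L] : [/\ (p1, q1) \in L, (p2, q2) \in L & (p3, q3) \in L].
  by rewrite EL !inE !eqxx ?orbT.
(* in the pattern aba, these exclude the first a lying just above the second *)
have sw23 : ~~ ((p3 < p2) && (q3 < q2)).
  move: (c2L) (c3L); rewrite !mem_filter => /andP[ab2 c2S] /andP[ab3 c3S].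
  exact: ab_cells_not_SW rs cw (stage_inv_count_succ inv) c2S c3S ab2 ab3.
have r23 : p2 = p3 -> q2 < q3 -> f (p2, q2) < f (p3, q3).
  by move=> -> ?; apply: row_strict_lt rs (LS _ c3L) _.
have [nab nba] : (a == a.+1) = false /\ (a.+1 == a) = false by split; lia.
move: sL labL; rewrite EL /rd_lt /= => /and3P[lt12 lt23 _] labL.
(* sigmabar_a raises the first a of aab, the last a of aba and the middle a of baa *)
case: (perm_aab_cases labL) => -[e1 e2 e3];
  [apply: (raise (p1, q1)) | apply: (raise (p3, q3)) | apply: (raise (p2, q2))] => //;
  try (move=> y; rewrite EL !inE => /or3P[] /eqP-> /=; rewrite xpair_eqE; lia);
  rewrite EL /= e1 e2 e3 /sigmabar_rule !eqseq_cons !eqxx nab nba /= !xpair_eqE;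
  by repeat case: ifP => // ?; exfalso; lia.
Qed.

Lemma sigma_foldl_col_reading (U : seq cell) n f a m :
  perm_eq U S -> sorted col_rd_le U -> 0 < a -> a + m < n -> stage_inv n S f a ->
  foldl (fun w k => sigma k w) (map f U) (iota a m) =
  map (foldl (fun g k => relabel_sigmabar k S g) f (iota a m)) U.
Proof.
move=> pUS sU; elim: m a f => [//|m IH] a f a0 am inv /=.
have [rs cw _] := inv.
rewrite (sigma_map_rev (l := S)) ?(perm_uniq pUS) ?S_uniq //; last first.
  apply: filter_col_reading => // x y; rewrite !mem_filter => /andP[abx xS] /andP[aby yS].
  exact: ab_cells_not_SW rs cw (stage_inv_count_succ inv) xS yS abx aby.
by apply: IH; [|lia|apply: stage_inv_relabel => //; lia].
Qed.

End Labellings.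

Lemma mem_diagram la (i j : nat) :
  ((i, j) \in diagram la) = (i < size la) && (j < nth 0 la i).
Proof.
apply/flatten_mapP/andP => [[i' + /mapP[j' + [-> ->]]]|[hi hj]].
  by rewrite mem_rev !mem_iota; lia.
by exists i; [rewrite mem_rev mem_iota | apply/mapP; exists j; rewrite ?mem_iota].
Qed.

Lemma sorted_diagram la : sorted rd_lt (diagram la).
Proof.
rewrite sorted_pairwise; last exact: rd_lt_trans.
have : sorted (fun x y => y < x) (rev (iota 0 (size la))).
  by rewrite rev_sorted; exact: iota_ltn_sorted.
rewrite /diagram sorted_pairwise; last by move=> ? ? ? /=; lia.
elim: (rev _) => //= i r IH /andP[ir pr]; rewrite pairwise_cat IH // andbT.
apply/andP; split.
  apply/allrelP => x y /mapP[j _ ->] /flatten_mapP[i' i'r /mapP[j' _ ->]].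
  by move/allP: ir => /(_ _ i'r); rewrite /rd_lt /=; lia.
rewrite pairwise_map; apply: (@sub_in_pairwise _ _ ltn) => //=.
  by move=> x y _ _; rewrite /rd_lt /=; lia.
by rewrite -sorted_pairwise; [exact: iota_ltn_sorted | exact: ltn_trans].
Qed.

Lemma size_diagram la : size (diagram la) = sumn la.
Proof.
rewrite /diagram size_flatten /shape -map_comp map_rev sumn_rev.
under eq_map => i do rewrite /= size_map size_iota.
by rewrite -/(mkseq _ _) mkseq_nth.
Qed.

Lemma ideal_diagram la : is_partition la -> ideal (diagram la).
Proof.
case/andP => sla _ i j i' j'; rewrite !mem_diagram => /andP[hi hj] hi' hj'.
have hi'' : i' < size la by lia.
have geq_trans : transitive geq by move=> ? ? ? /=; lia.
have := sorted_leq_nth geq_trans leqnn 0 sla.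
by move=> /(_ i' i hi'' hi hi') /=; rewrite hi''; lia.
Qed.

Definition transpose_cells (S : seq cell) : seq cell := sort rd_le (map swapc S).

Lemma swapcK : involutive swapc.
Proof. by case. Qed.

Lemma perm_swapc_transpose_cells (S : seq cell) :
  perm_eq (map swapc (transpose_cells S)) S.
Proof.
by rewrite -[X in perm_eq _ X](mapK swapcK S); apply: perm_map; rewrite perm_sort.
Qed.

Lemma sorted_swapc_transpose_cells (S : seq cell) :
  sorted col_rd_le (map swapc (transpose_cells S)).
Proof.
by rewrite sorted_map; apply: sub_sorted (sort_sorted rd_le_total _) => -[? ?] [? ?].
Qed.

Lemma entry_map (l : seq cell) f c : c \in l -> entry (l, map f l) c = f c.
Proof. by move=> cl; rewrite /entry /= (nth_map c) ?index_mem // nth_index. Qed.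

Lemma transpose_map (l : seq cell) f :
  transpose (l, map f l) = (transpose_cells l, map (f \o swapc) (transpose_cells l)).
Proof.
congr pair; apply/eq_in_map => c; rewrite mem_sort => /mapP[d dl ->] /=.
by rewrite swapcK entry_map.
Qed.

Lemma Rdel_map k (l : seq cell) f :
  Rdel k (l, map f l) =
  (filter (preim f (predC1 k)) l, map f (filter (preim f (predC1 k)) l)).
Proof. by rewrite /Rdel /= -map_comp -filter_mask filter_map. Qed.

Lemma transpose_cells_filter (S : seq cell) (P : pred cell) : sorted rd_le S ->
  transpose_cells (filter (preim swapc P) (transpose_cells S)) = filter P S.
Proof.
move=> sS; apply: (sorted_eq rd_le_trans rd_le_anti).
- exact: sort_sorted rd_le_total _.
- exact: sorted_filter rd_le_trans _ _ sS.
rewrite /transpose_cells perm_sort -filter_map.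
exact/perm_filter/perm_swapc_transpose_cells.
Qed.

Lemma transpose_Rdel_transposed (S : seq cell) g k : sorted rd_le S ->
  transpose (Rdel k (transpose_cells S, map (g \o swapc) (transpose_cells S))) =
  Rdel k (S, map g S).
Proof.
move=> sS; rewrite !Rdel_map transpose_map.
rewrite (transpose_cells_filter (preim g (predC1 k)) sS).
by congr pair; apply/eq_map => c /=; rewrite swapcK.
Qed.

Definition merge12 (x : nat) : nat := if x <= 2 then 1 else x.-1.

Lemma rop01_tau_m1 w : rop 0 1 1 1 (tau_m1 w) = map merge12 w.
Proof. by rewrite /rop /tau_m1 -map_comp; apply: eq_map => -[|[|[|x]]]. Qed.

Lemma rop10_tau_m1 w : rop 1 0 1 1 (tau_m1 w) = map merge12 w.
Proof. by rewrite /rop /tau_m1 -map_comp; apply: eq_map => -[|[|[|x]]]. Qed.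

Lemma map_merge12_iota n : 1 < n -> map merge12 (iota 1 n) = 1 :: iota 1 n.-1.
Proof.
case: n => [|[|n]] // _; rewrite /= -[3]/(1 + 2) iotaDl -map_comp.
congr [:: _, _ & _]; rewrite -[RHS]map_id; apply/eq_in_map => x.
by rewrite mem_iota /= /merge12; case: ifP; lia.
Qed.

Lemma precedes_rd_lt (S : seq cell) (w : seq nat) (c d : cell) :
  sorted rd_lt S -> uniq w -> size w = size S -> c \in S -> d \in S ->
  precedes (entry (S, w) c) (entry (S, w) d) w -> rd_lt c d.
Proof.
move=> sS uw sw cS dS; rewrite /precedes /entry /= !index_uniq ?sw ?index_mem //.
exact: (sorted_ltn_index rd_lt_trans sS c d cS dS).
Qed.

Lemma merge12_le : {homo merge12 : x y / x <= y}.
Proof. by move=> x y; rewrite /merge12; case: ifP; case: ifP; lia. Qed.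

Lemma merge12_lt x y : 0 < x < y -> (x, y) != (1, 2) -> merge12 x < merge12 y.
Proof. by rewrite xpair_eqE /merge12; case: ifP; case: ifP; lia. Qed.

Lemma tword_entry (T : tableau) : uniq (tshape T) -> size (tword T) = size (tshape T) ->
  tword T = map (entry T) (tshape T).
Proof.
case: T => S w /= uS sw; apply: (@eq_from_nth _ 0); rewrite ?size_map // => i iw.
by rewrite (nth_map (0, 0)) -?sw // /entry index_uniq -?sw.
Qed.

Lemma standard_cells n T : standard n T ->
  [/\ sorted rd_lt (tshape T), ideal (tshape T) & tword T = map (entry T) (tshape T)].
Proof.
case: T => S w [la [pla [sla [/= ES [pw _]]]]].
have sS : sorted rd_lt S by rewrite ES sorted_diagram.
split=> //; first by rewrite ES; apply: ideal_diagram.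
apply: (@tword_entry (S, w)); first exact: sorted_uniq rd_lt_trans rd_lt_irr _ sS.
by rewrite /= ES size_diagram (perm_size pw) size_iota.
Qed.

Lemma standard_stage_inv n T : 2 <= n -> standard n T -> precedes 2 1 (tword T) ->
  stage_inv n (tshape T) (merge12 \o entry T) 1.
Proof.
move=> n2 stT; have [/= sS iS Ew] := standard_cells stT.
case: T stT Ew sS iS => S w [_ [_ [_ [_ [pw [rowT colT]]]]]] /= Ew sS iS prec.
have sw : size w = size S by rewrite Ew size_map.
have uw : uniq w by rewrite (perm_uniq pw) iota_uniq.
have e_pos c : c \in S -> 0 < entry (S, w) c.
  move=> cS; have : entry (S, w) c \in iota 1 n.
    by rewrite -(perm_mem pw) [X in _ \in X]Ew map_f.
  by rewrite mem_iota; lia.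
split.
- move=> i j ij; have ij' : (i, j) \in S by apply: iS ij _ _.
  apply: merge12_lt; first by rewrite e_pos ?rowT.
  rewrite xpair_eqE; apply/andP => -[/eqP e1 /eqP e2].
  have := precedes_rd_lt sS uw sw ij ij'; rewrite e1 e2 => /(_ prec).
  by rewrite /rd_lt /=; lia.
- by move=> i j ij; apply/merge12_le/ltnW/colT.
by rewrite map_comp -Ew -map_merge12_iota //; apply: perm_map.
Qed.

Lemma B1_sigmabar_chain n T : 2 <= n -> standard n T -> precedes 2 1 (tword T) ->
  B1 n T = Rdel n.-1 (wact (sigmabar_chain n) (wact (rop 1 0 1 1) (wact tau_m1 T))).
Proof.
move=> n2 stT prec; have inv := standard_stage_inv n2 stT prec.
have [sS iS Ew] := standard_cells stT.
case: T {stT prec} inv sS iS Ew => S w /= inv sS iS Ew.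
set f0 := merge12 \o entry (S, w).
set fN := foldl (fun g k => relabel_sigmabar k S g) f0 (iota 1 (n - 2)).
set St := transpose_cells S.
have colU : sigma_chain n (map f0 (map swapc St)) = map fN (map swapc St).
  apply: (sigma_foldl_col_reading sS iS (perm_swapc_transpose_cells S)
            (sorted_swapc_transpose_cells S) _ _ inv); lia.
rewrite /B1 /B0 /wact /= rop01_tau_m1 rop10_tau_m1 -/(transpose_cells S) -/St.
have -> : map merge12 [seq entry (S, w) (swapc c) | c <- St] = map f0 (map swapc St).
  by rewrite -!map_comp.
rewrite colU -map_comp transpose_Rdel_transposed ?(sub_sorted rd_ltW) //.
rewrite Ew -map_comp /sigmabar_chain sigmabar_foldl_map //.
exact: sorted_uniq rd_lt_trans rd_lt_irr _ sS.
Qed.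

Theorem mainTheorem14 :
  (forall (n : nat) (T : tableau),
      2 <= n -> standard n T -> precedes 2 1 (tword T) ->
      B1 n T =
      Rdel n.-1 (wact (sigmabar_chain n) (wact (rop 1 0 1 1) (wact tau_m1 T))))
  /\
  (forall (a : nat) (w : seq nat),
      ev_cond a w -> sigma a (rev w) = rev (sigmabar a w)).
Proof.
split; first exact: B1_sigmabar_chain.
by move=> a w _; apply: sigma_rev.
Qed.
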